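(* Let $m\in\mathbf{N}$ and let $n\le5$ be a positive integer. If $\mathcal{P}$ is a closed set family of shape $(m^n)$, then $\mathcal{P}$ has type $(m^n)\star\nu$ for some partition $\nu$ of $n-1$ with at most $m$ parts.
   Context: Majorization: for $m$-subsets $X=\{x_1<\dots<x_m\}$, $Y=\{y_1<\dots<y_m\}$ of $\mathbf{N}$, $X\preceq Y$ if $x_i\le y_i$ for all $i$. A set family of shape $(m^n)$ is a collection of $n$ distinct $m$-subsets of $\mathbf{N}$; it is closed if $Y$ in it and $X\preceq Y$ imply $X$ in it; it has type $\lambda$ (largest part $a$, conjugate $\lambda'$) if for each $i\in\{1,\dots,a\}$ exactly $\lambda'_i$ of its sets contain $i$ (closed set families always have a type). For a partition $\nu$ of $n-1$ with $k\le m$ parts, $(m^n)\star\nu$ is the partition obtained from the Young diagram of $(m^n)$ by, for each $1\le i\le k$, deleting $\nu_i$ boxes (from the bottom) of column $m+1-i$ and adding $\nu_i$ boxes to row $i$. *)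

From mathcomp Require Import all_boot.
Set Implicit Arguments. Unset Strict Implicit. Unset Printing Implicit Defensive.

(* Ground set N = {1,2,3,...}.  An m-subset X = {x_1 < ... < x_m} of N is
   encoded by its increasing enumeration [:: x_1; ...; x_m]. *)
Definition msubset (m : nat) (X : seq nat) : bool :=
  [&& sorted ltn X, size X == m & all (fun x => 0 < x) X].

Definition majorized (X Y : seq nat) : bool :=
  (size X == size Y) && all2 leq X Y.

Definition set_family (m n : nat) (P : seq (seq nat)) : Prop :=
  [/\ uniq P, size P = n & all (msubset m) P].

Definition closed_family (m : nat) (P : seq (seq nat)) : Prop :=
  forall X Y, Y \in P -> msubset m X -> majorized X Y -> X \in P.

Definition is_partition (nu : seq nat) (N : nat) : Prop :=
  [/\ sorted geq nu, all (fun x => 0 < x) nu & sumn nu = N].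

Definition largest_part (lam : seq nat) : nat := foldr maxn 0 lam.
Definition conj_part (lam : seq nat) (i : nat) : nat :=
  count (fun r => i <= r) lam.

Definition has_type (P : seq (seq nat)) (lam : seq nat) : Prop :=
  forall i, 1 <= i <= largest_part lam ->
    count (fun X => i \in X) P = conj_part lam i.

(* (m^n) * nu : starting from the n x m rectangle, for each 1 <= i <= k
   delete the bottom nu_i boxes of column m+1-i (so row j loses one box
   for each i with j > n - nu_i) and add nu_i boxes to row i.  Row j
   (1 <= j <= n) of the result therefore has length
     m - #{ i <= k : n - nu_i < j } + nu_j      (nu_j := 0 for j > k). *)
Definition star (m n : nat) (nu : seq nat) : seq nat :=
  [seq m - count (fun x => n - x < j) nu + nth 0 nu j.-1 | j <- iota 1 n].

From mathcomp Require Import all_boot zify.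
Set Implicit Arguments. Unset Strict Implicit. Unset Printing Implicit Defensive.

(* Call [excess X] the amount by which the sum of an m-subset X exceeds 1 + ... + m.
   Lowering one entry of X at a time produces sets majorized by X of every smaller
   excess; in a closed family they are members with pairwise distinct sums, so every
   member of a closed family of n sets has excess less than n, hence at most 4 here.
   For m > 4 every member then begins with 1, ..., m - 4: deleting this common prefix
   and shifting down gives a closed family of shape (4^n), and both the type and
   (m^n)*nu shift up by m - 4 along the way.  For m <= 4 all members are m-subsets of
   {1, ..., m + 4} of excess at most 4, and the finitely many closed subfamilies of
   these are checked by computation. *)

Definition excess (X : seq nat) : nat := sumn X - sumn (iota 1 (size X)).

Lemma sumn_iotaS b k : sumn (iota b.+1 k) = sumn (iota b k) + k.
Proof. by elim: k b => [|k IHk] b //=; rewrite IHk; lia. Qed.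

Lemma leq_sumn_iota b c k : b <= c -> sumn (iota b k) <= sumn (iota c k).
Proof.
move=> le_bc; rewrite -(subnKC le_bc); elim: (c - b) => [|e IHe]; first by rewrite addn0.
by rewrite addnS sumn_iotaS; lia.
Qed.

Lemma last_iota a k : last a (iota a.+1 k) = a + k.
Proof. by elim: k a => [|k IHk] a /=; rewrite ?addn0 // IHk addnS. Qed.

Lemma path_ltn_gt a X : path ltn a X -> all (ltn a) X.
Proof. exact: (order_path_min ltn_trans). Qed.

Lemma all2_leq_refl (s : seq nat) : all2 leq s s.
Proof. by elim: s => //= x s ->; rewrite leqnn. Qed.

Lemma all2_leq_trans : transitive (@all2 nat nat leq).
Proof.
move=> t s u; elim: s t u => [|x s IHs] [|y t] [|z u] //= /andP[le_xy le_st] /andP[le_yz le_tu].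
by rewrite (leq_trans le_xy le_yz) (IHs _ _ le_st le_tu).
Qed.

Lemma path_ltn_sumn_iota a X : path ltn a X -> sumn (iota a.+1 (size X)) <= sumn X.
Proof.
elim: X a => [|x X IHX] b //= /andP[lt_bx pathX].
by have := IHX _ pathX; have := leq_sumn_iota (size X) (lt_bx : b.+2 <= x.+1); lia.
Qed.

Lemma path_ltn_mem_leq a X y : path ltn a X -> y \in X ->
  y + sumn (iota a.+1 (size X)) <= sumn X + a + size X.
Proof.
elim: X a => [|x X IHX] b //= /andP[lt_bx pathX] yX.
have := leq_sumn_iota (size X) (lt_bx : b.+2 <= x.+1); have := path_ltn_sumn_iota pathX.
by move: yX; rewrite inE => /predU1P[-> | /(IHX _ pathX)]; lia.
Qed.

(* A gap among the first [k] entries would raise each of the at least [size X - k + 1]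
   later entries. *)
Lemma path_ltn_take_iota a X k : path ltn a X -> k <= size X ->
  sumn X <= sumn (iota a.+1 (size X)) + (size X - k) -> take k X = iota a.+1 k.
Proof.
elim: X a k => [|x X IHX] b [|k] //= /andP[lt_bx pathX] le_kX le_sum.
suff eq_x : x = b.+1 by subst x; rewrite (IHX b.+1 k pathX) //; lia.
apply/eqP; rewrite eqn_leq lt_bx andbT leqNgt; apply/negP => lt_b1x.
have := path_ltn_sumn_iota pathX; have := sumn_iotaS b.+2 (size X).
by have := leq_sumn_iota (size X) (lt_b1x : b.+3 <= x.+1); lia.
Qed.

Lemma path_ltn_lower a X : path ltn a X -> X != iota a.+1 (size X) ->
  exists Y, [/\ path ltn a Y, size Y = size X, all2 leq Y X & (sumn Y).+1 = sumn X].
Proof.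
elim: X a => [|x X IHX] b //; rewrite [path _ _ _]/= => /andP[lt_bx pathX] neX.
have [eq_x | ne_x] := eqVneq x b.+1.
  subst x; have neX' : X != iota b.+2 (size X).
    by apply: contra neX => /eqP eX; rewrite {1}eX.
  have [Y [pathY sizeY leYX sumY]] := IHX _ pathX neX'.
  exists (b.+1 :: Y); split => /=; last by lia.
  - by rewrite ltnSn pathY.
  - by rewrite sizeY.
  - by rewrite leqnn leYX.
exists (x.-1 :: X); split => //=; last by lia.
- apply/andP; split; first by lia.
  by case: X pathX {IHX neX} => //= z X /andP[lt_xz ->]; rewrite andbT; lia.
- by rewrite leq_pred all2_leq_refl.
Qed.

Lemma msubset_path m X : msubset m X = path ltn 0 X && (size X == m).
Proof.
rewrite /msubset; case: X => [|x X] /=; first by rewrite andbT.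
apply/and4P/andP => [[pathX sizeX x_gt0 _] | [/andP[x_gt0 pathX] sizeX]].
  by rewrite x_gt0 pathX.
by split => //; apply: sub_all (path_ltn_gt pathX) => y /=; lia.
Qed.

Lemma msubset_mem_leq m X y : msubset m X -> y \in X -> y <= m + excess X.
Proof.
rewrite msubset_path /excess => /andP[pathX /eqP <-] yX.
by have := path_ltn_mem_leq pathX yX; have := path_ltn_sumn_iota pathX; lia.
Qed.

Lemma msubset_subseq_iota m N X :
  msubset m X -> all (leq^~ N) X -> subseq X (iota 1 N).
Proof.
move=> mX le_XN; have [sortX _ X_gt0] := and3P mX.
suff -> : X = [seq x <- iota 1 N | x \in X] by apply: filter_subseq.
apply: (irr_sorted_eq ltn_trans ltnn) => //.
  by apply: sorted_filter; [exact: ltn_trans | exact: iota_ltn_sorted].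
move=> x; rewrite mem_filter mem_iota.
by case xX: (x \in X); rewrite ?andbF //=; have := allP X_gt0 x xX; have := allP le_XN x xX; lia.
Qed.

Lemma majorized_refl X : majorized X X.
Proof. by rewrite /majorized eqxx all2_leq_refl. Qed.

Lemma majorized_trans : transitive majorized.
Proof.
move=> Y X Z /andP[/eqP sXY leXY] /andP[/eqP sYZ leYZ].
by rewrite /majorized sXY sYZ eqxx (all2_leq_trans leXY leYZ).
Qed.

Lemma msubset_lower_chain m X k : msubset m X -> k <= excess X ->
  exists Y, [/\ msubset m Y, majorized Y X & sumn Y = sumn X - k].
Proof.
move=> mX; elim: k => [|k IHk] le_k.
  by exists X; rewrite majorized_refl subn0.
have [Y [mY leYX sumY]] := IHk (ltnW le_k).
move: (mY); rewrite msubset_path => /andP[pathY /eqP sizeY].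
have /andP[/eqP sizeYX _] := leYX.
have neY : Y != iota 1 (size Y).
  by apply/eqP => eY; move: sumY le_k; rewrite /excess -sizeYX {1}eY; lia.
have [Z [pathZ sizeZ leZY sumZ]] := path_ltn_lower pathY neY.
exists Z; split; last by lia.
  by rewrite msubset_path pathZ sizeZ sizeY eqxx.
by apply: majorized_trans leYX; rewrite /majorized sizeZ eqxx.
Qed.

Lemma closed_family_excess_lt m n P X :
  set_family m n P -> closed_family m P -> X \in P -> excess X < n.
Proof.
case=> _ sizeP mP closedP XP; have mX : msubset m X := allP mP X XP.
pose sums := [seq sumn X - e | e <- iota 0 (excess X).+1].
have uniq_sums : uniq sums.
  by rewrite map_inj_in_uniq ?iota_uniq // => e1 e2; rewrite !mem_iota /excess; lia.
have sub_sums : {subset sums <= map sumn P}.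
  move=> y /mapP[e]; rewrite mem_iota add0n ltnS => /andP[_ le_e] ->.
  have [Y [mY leYX <-]] := msubset_lower_chain mX le_e.
  exact/map_f/(closedP _ _ XP mY leYX).
by have := uniq_leq_size uniq_sums sub_sums; rewrite !size_map size_iota sizeP.
Qed.

Definition has_star_type (m n : nat) (P : seq (seq nat)) : Prop :=
  exists nu : seq nat,
    [/\ is_partition nu n.-1, size nu <= m & has_type P (star m n nu)].

Lemma has_type_perm P Q lam : perm_eq P Q -> has_type Q lam -> has_type P lam.
Proof. by move=> /permP eqPQ typeQ i /typeQ <-. Qed.

Lemma has_star_type_perm m n P Q :
  perm_eq P Q -> has_star_type m n Q -> has_star_type m n P.
Proof.
by move=> eqPQ [nu [part_nu size_nu typeQ]]; exists nu; split=> //; apply: has_type_perm typeQ.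
Qed.

Fixpoint subseqs_of_size (T : Type) (k : nat) (s : seq T) : seq (seq T) :=
  match k, s with
  | 0, _ => [:: [::]]
  | _.+1, [::] => [::]
  | k'.+1, x :: s' => map (cons x) (subseqs_of_size k' s') ++ subseqs_of_size k s'
  end.

Lemma mem_subseqs_of_size (T : eqType) (s t : seq T) :
  subseq t s -> t \in subseqs_of_size (size t) s.
Proof.
elim: s t => [|x s IHs] [|y t] //=.
rewrite mem_cat; case: eqP => [-> /IHs t_s | _ /IHs t_s]; last by rewrite t_s orbT.
by rewrite map_f.
Qed.

Definition low_msubsets (m : nat) : seq (seq nat) :=
  [seq X <- subseqs_of_size m (iota 1 (m + 4)) | msubset m X && (excess X <= 4)].

Lemma mem_low_msubsets m X : msubset m X -> excess X <= 4 -> X \in low_msubsets m.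
Proof.
move=> mX low_X; rewrite mem_filter mX low_X; have /and3P[_ /eqP <- _] := mX.
apply/mem_subseqs_of_size/(msubset_subseq_iota mX)/allP => y /(msubset_mem_leq mX).
by have /and3P[_ /eqP -> _] := mX; lia.
Qed.

Definition closedb (u S : seq (seq nat)) : bool :=
  all (fun Y => all (fun X => majorized X Y ==> (X \in S)) u) S.

(* Column [m+1-i] of (m^n)*nu has [n - nu_i] boxes, so [nu_i] must be the number of sets
   avoiding [m+1-i]. *)
Definition column_deficits (m n : nat) (S : seq (seq nat)) : seq nat :=
  [seq d <- [seq n - count (fun X => (m.+1 - j) \in X) S | j <- iota 1 m] | 0 < d].

Definition is_partitionb (nu : seq nat) (N : nat) : bool :=
  [&& sorted geq nu, all (fun x => 0 < x) nu & sumn nu == N].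

Lemma is_partitionP nu N : reflect (is_partition nu N) (is_partitionb nu N).
Proof. by apply: (iffP and3P) => -[? ? /eqP ?]. Qed.

Definition has_typeb (S : seq (seq nat)) (lam : seq nat) : bool :=
  all (fun i => count (fun X => i \in X) S == conj_part lam i) (iota 1 (largest_part lam)).

Lemma has_typeP S lam : reflect (has_type S lam) (has_typeb S lam).
Proof.
apply: (iffP allP) => [typeS i range_i | typeS i].
  by apply/eqP/typeS; rewrite mem_iota add1n ltnS.
by rewrite mem_iota add1n ltnS => /typeS ->.
Qed.

Definition has_star_typeb (m n : nat) (S : seq (seq nat)) : bool :=
  let nu := column_deficits m n S in
  [&& is_partitionb nu n.-1, size nu <= m & has_typeb S (star m n nu)].

Lemma has_star_typebW m n S : has_star_typeb m n S -> has_star_type m n S.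
Proof.
by case/and3P=> /is_partitionP part_nu size_nu /has_typeP typeS; exists (column_deficits m n S).
Qed.

Definition small_shape_check (m n : nat) : bool :=
  let u := low_msubsets m in
  uniq u && all (fun S => closedb u S ==> has_star_typeb m n S) (subseqs_of_size n u).

Lemma small_shapes_checked : all (fun m => all (small_shape_check m) (iota 1 5)) (iota 0 5).
Proof. by vm_compute. Qed.

Lemma has_star_type_small m n P : m <= 4 -> 0 < n <= 5 ->
  set_family m n P -> closed_family m P -> has_star_type m n P.
Proof.
move=> le_m4 range_n famP closedP; have [uniqP sizeP mP] := famP.
have /andP[uniq_u /allP checkS] : small_shape_check m n.
  by apply: (allP (allP small_shapes_checked m _)); rewrite mem_iota; lia.
set u := low_msubsets m in uniq_u checkS.
have sub_Pu : {subset P <= u}.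
  move=> X XP; apply: mem_low_msubsets; first exact: (allP mP).
  by have := closed_family_excess_lt famP closedP XP; lia.
set S := [seq X <- u | X \in P].
have eqPS : perm_eq P S.
  apply: uniq_perm => //; first exact: filter_uniq.
  by move=> X; rewrite /S mem_filter; case XP: (X \in P); rewrite /= ?sub_Pu.
have S_u : S \in subseqs_of_size n u.
  by rewrite -sizeP (perm_size eqPS) mem_subseqs_of_size ?filter_subseq.
have closedS : closedb u S.
  apply/allP => Y; rewrite mem_filter => /andP[YP _]; apply/allP => X Xu.
  apply/implyP => leXY; rewrite mem_filter Xu andbT (closedP X Y) //.
  by move: Xu; rewrite mem_filter => /andP[/andP[]].
apply/(has_star_type_perm eqPS)/has_star_typebW.
by move: (checkS S S_u); rewrite closedS.
Qed.

Definition shift (d : nat) (T : seq nat) : seq nat := iota 1 d ++ map (addn d) T.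
Definition unshift (d : nat) (X : seq nat) : seq nat := map (subn^~ d) (drop d X).

Lemma shiftK d : cancel (shift d) (unshift d).
Proof. by move=> T; rewrite /unshift /shift drop_size_cat ?size_iota // (mapK (addKn d)). Qed.

Lemma msubset_shift d k T : msubset (d + k) (shift d T) = msubset k T.
Proof.
have path_iota : path ltn 0 (iota 1 d) := iota_ltn_sorted 0 d.+1.
rewrite !msubset_path cat_path path_iota last_iota.
by rewrite -{1}(addn0 d) (mono_path (ltn_add2l d)) size_cat size_iota size_map eqn_add2l.
Qed.

Lemma majorized_shift d X Y : majorized X Y -> majorized (shift d X) (shift d Y).
Proof.
case/andP=> /eqP sXY leXY; rewrite /majorized /shift !size_cat !size_map sXY eqxx /=.
elim: (iota 1 d) => [|x s IHs] /=; last by rewrite leqnn IHs.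
by elim: X Y {sXY} leXY => [|x X IHX] [|y Y] //= /andP[le_xy /IHX ->]; rewrite leq_add2l le_xy.
Qed.

Lemma mem_shift d T i : 0 < i -> (i \in shift d T) = (i <= d) || (i - d \in T).
Proof.
move=> i_gt0; rewrite mem_cat mem_iota add1n ltnS i_gt0 /=.
case: leqP => [le_id | lt_di] //=.
by rewrite -{1}(subnKC (ltnW lt_di)) mem_map //; apply: addnI.
Qed.

Lemma shift_unshift d k X : msubset (d + k) X -> excess X <= k -> shift d (unshift d X) = X.
Proof.
rewrite msubset_path => /andP[pathX /eqP sizeX] low_X.
have takeX : take d X = iota 1 d.
  by apply: path_ltn_take_iota pathX _ _; move: low_X; rewrite /excess sizeX; lia.
have pathX' : path ltn d (drop d X).
  by move: pathX; rewrite -{1}(cat_take_drop d X) takeX cat_path last_iota => /andP[].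
rewrite /shift /unshift -map_comp map_id_in -?takeX ?cat_take_drop // => x.
by move/(allP (path_ltn_gt pathX'))/ltnW/subnKC.
Qed.

Lemma conj_part_addn d lam i :
  conj_part (map (addn d) lam) i = if i <= d then size lam else conj_part lam (i - d).
Proof.
rewrite /conj_part count_map; case: leqP => [le_id | lt_di].
  by rewrite -count_predT; apply: eq_count => r /=; lia.
by apply: eq_count => r /=; lia.
Qed.

Lemma largest_part_addn d lam : largest_part (map (addn d) lam) <= d + largest_part lam.
Proof. by rewrite /largest_part; elim: lam => //= x lam IHlam; lia. Qed.

Lemma has_type_shift d Q lam : size lam = size Q ->
  has_type Q lam -> has_type (map (shift d) Q) (map (addn d) lam).
Proof.
move=> size_lam typeQ i /andP[i_gt0 le_i]; rewrite count_map conj_part_addn.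
case: leqP => [le_id | lt_di].
  by rewrite size_lam -count_predT; apply: eq_count => T; rewrite /= mem_shift // le_id.
rewrite -typeQ; last by have := largest_part_addn d lam; lia.
by apply: eq_count => T; rewrite /= mem_shift // leqNgt lt_di.
Qed.

Lemma star_addn d k n nu : size nu <= k -> star (d + k) n nu = map (addn d) (star k n nu).
Proof.
move=> size_nu; rewrite /star -map_comp; apply: eq_map => j /=.
by have := count_size (fun x => n - x < j) nu; lia.
Qed.

Lemma has_star_type_shift d k n Q :
  size Q = n -> has_star_type k n Q -> has_star_type (d + k) n (map (shift d) Q).
Proof.
move=> sizeQ [nu [part_nu size_nu typeQ]]; exists nu; split => //; first by lia.
by rewrite star_addn //; apply: has_type_shift typeQ; rewrite size_map size_iota.
Qed.

Lemma unshift_family d k n P :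
  set_family (d + k) n P -> closed_family (d + k) P -> {in P, forall X, excess X <= k} ->
  [/\ set_family k n (map (unshift d) P), closed_family k (map (unshift d) P)
    & P = map (shift d) (map (unshift d) P)].
Proof.
move=> [uniqP sizeP mP] closedP lowP.
have shift_unshiftP : {in P, forall X, shift d (unshift d X) = X}.
  by move=> X XP; apply: shift_unshift (allP mP X XP) (lowP X XP).
have defP : P = map (shift d) (map (unshift d) P).
  by rewrite -map_comp -{1}(map_id P); apply/esym/eq_in_map.
split => //.
  split; rewrite ?size_map //.
    by rewrite (map_inj_in_uniq (can_in_inj shift_unshiftP)).
  apply/allP => _ /mapP[X XP ->].
  by rewrite -(msubset_shift d) shift_unshiftP //; apply: (allP mP).
move=> X _ /mapP[Y YP ->] mX leXY; rewrite -(shiftK d X); apply: map_f.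
apply: (closedP _ Y YP); first by rewrite msubset_shift.
by rewrite -(shift_unshiftP Y YP); apply: majorized_shift.
Qed.

Theorem lemma5p5 (m n : nat) (P : seq (seq nat)) :
  0 < n -> n <= 5 ->
  set_family m n P -> closed_family m P ->
  exists nu : seq nat,
    [/\ is_partition nu n.-1, size nu <= m & has_type P (star m n nu)].
Proof.
move=> n_gt0 n_le5 famP closedP.
have [le_m4 | lt_4m] := leqP m 4; first by apply: has_star_type_small; rewrite ?n_gt0.
have lowP : {in P, forall X, excess X <= 4}.
  by move=> X /(closed_family_excess_lt famP closedP); lia.
have [d eq_m] : exists d, m = d + 4 by exists (m - 4); lia.
subst m; have [famQ closedQ ->] := unshift_family famP closedP lowP.
apply: has_star_type_shift; first by case: famQ.
by apply: has_star_type_small; rewrite ?n_gt0.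
Qed.
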